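(* Let $d\ge46$. The number of finite strictly increasing sequences of positive integers $h_1<\dots<h_k$ ($k\ge1$) satisfying $h_1\ge7$, $h_k=d+k+1$ and $h_{i+1}-h_i\ge6$ for all $i$ (equivalently, the number of $d$-dimensional lattices $L_d(h_1,\dots,h_k)$ satisfying these conditions) equals $\alpha(d-8)$.
   Context: For a strictly increasing sequence of positive integers $h_1<h_2<\dots$ and $d\ge1$, $L_d(h_1,h_2,\dots)=\{x\in\mathbb Z^{d+2}:\sum_ix_i=0,\ \sum_is_ix_i=0\}$ where $s_1<\dots<s_{d+2}$ are the $d+2$ smallest elements of $\{1,2,\dots\}\setminus\{h_1,h_2,\dots\}$. For $n\ge1$, $\alpha(n)$ is the number of strictly increasing integer sequences $s_1=1<s_2<\dots<s_n$ with $s_{i+1}-s_i\in\{1,2\}$ for all $i$ and such that whenever $1\le i<j\le n-1$ with $s_{i+1}-s_i=s_{j+1}-s_j=2$ one has $s_j-s_i\ge6$; it satisfies $\alpha(n)=n$ for $n\le6$ and $\alpha(n)=\alpha(n-1)+\alpha(n-5)$ for $n\ge6$. *)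

From mathcomp Require Import all_boot.
Set Implicit Arguments. Unset Strict Implicit. Unset Printing Implicit Defensive.

(* h is the list [:: h_1; ...; h_k]; indices are 0-based in Rocq. *)
Definition valid_h (d : nat) (h : seq nat) : Prop :=
  [/\ 1 <= size h,
      (forall i, i.+1 < size h -> nth 0 h i < nth 0 h i.+1),
      7 <= nth 0 h 0,
      nth 0 h (size h).-1 = d + size h + 1
    & (forall i, i.+1 < size h -> 6 <= nth 0 h i.+1 - nth 0 h i)].

(* "the number of objects satisfying P is c": some duplicate-free list
   enumerates exactly the objects satisfying P, and has length c. *)
Definition num_of (T : eqType) (P : T -> Prop) (c : nat) : Prop :=
  exists l : seq T, [/\ uniq l, (forall x, x \in l <-> P x) & size l = c].

Fixpoint steps12 (m x : nat) : seq (seq nat) :=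
  match m with
  | 0 => [:: [::]]
  | m'.+1 => match m' with
             | 0 => [:: [:: x]]
             | _ => map (cons x) (steps12 m' x.+1 ++ steps12 m' x.+2)
             end
  end.

(* s = [:: s_1; ...; s_n]: s_1 = 1, s_{i+1}-s_i in {1,2}, and whenever
   1 <= i < j <= n-1 with s_{i+1}-s_i = s_{j+1}-s_j = 2, s_j - s_i >= 6. *)
Definition alpha_ok (n : nat) (s : seq nat) : bool :=
  [&& size s == n,
      nth 0 s 0 == 1,
      all (fun i => (nth 0 s i.+1 == (nth 0 s i).+1) ||
                    (nth 0 s i.+1 == (nth 0 s i).+2)) (iota 0 n.-1)
    & all (fun i => all (fun j =>
          (i < j) ==> (nth 0 s i.+1 - nth 0 s i == 2) ==>
          (nth 0 s j.+1 - nth 0 s j == 2) ==> (6 <= nth 0 s j - nth 0 s i))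
          (iota 0 n.-1)) (iota 0 n.-1)].

(* steps12 n 1 lists every candidate (each exactly once); alpha counts the
   admissible ones. *)
Definition alpha (n : nat) : nat := count (alpha_ok n) (steps12 n 1).

(* sanity check: alpha(n) = n for n <= 6, then alpha(n) = alpha(n-1) + alpha(n-5) *)
Example alpha_check : map alpha (iota 1 14) =
  [:: 1; 2; 3; 4; 5; 6; 8; 11; 15; 20; 26; 34; 45; 60].
Proof. by vm_compute. Qed.

From mathcomp Require Import all_boot zify.
Set Implicit Arguments. Unset Strict Implicit. Unset Printing Implicit Defensive.

(* Writing [h_i = g_i + i], the admissible [h] correspond to the lists
   [6 <= g_1 < ... < g_(k-1) <= d - 4] with gaps [>= 5], closed by
   [g_k = d + 1]; their number [f (d - 4)] obeys [f m = f (m - 1) + f (m - 5)].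
   A sequence counted by [alpha n] is determined by the positions of its steps
   of size 2, and [s_j - s_i >= 6] says exactly that these positions are at
   least 5 apart; scanning such sequences from the left with a countdown shows
   that [alpha] obeys the same recurrence, and the initial values agree. *)

Definition double_step (s : seq nat) i := nth 0 s i.+1 = nth 0 s i + 2.

Definition steps12_seq (s : seq nat) :=
  forall i, i.+1 < size s -> nth 0 s i.+1 = nth 0 s i + 1 \/ double_step s i.

Definition doubles_index_apart (k : nat) (s : seq nat) :=
  forall i j, i < j -> j.+1 < size s -> double_step s i -> double_step s j ->
  k <= j - i.

Definition doubles_value_apart (k : nat) (s : seq nat) :=
  forall i j, i < j -> j.+1 < size s -> double_step s i -> double_step s j ->
  k <= nth 0 s j - nth 0 s i.

Definition doubles_from (c : nat) (s : seq nat) :=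
  forall j, j.+1 < size s -> double_step s j -> c <= j.

Lemma steps12_seq_behead x s : steps12_seq (x :: s) -> steps12_seq s.
Proof. by move=> Hs i Hi; apply: (Hs i.+1). Qed.

Lemma steps12_seq_nth_leq s i j : steps12_seq s -> i <= j -> j < size s ->
  nth 0 s i + (j - i) <= nth 0 s j.
Proof.
move=> Hs; elim: j => [|j IHj] Hij Hj; first by case: i Hij => // _; rewrite addn0.
case: (ltngtP i j.+1) Hij => // [lt_ij|<-] _; last by rewrite subnn addn0.
have := IHj (ltnSE lt_ij) (ltnW Hj); have := Hs j Hj; rewrite /double_step; lia.
Qed.

Lemma steps12_seq_nth_single s i j : steps12_seq s -> i <= j -> j < size s ->
  (forall l, i <= l -> l < j -> ~ double_step s l) ->
  nth 0 s j = nth 0 s i + (j - i).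
Proof.
move=> Hs; elim: j => [|j IHj] Hij Hj Hsingle.
  by case: i Hij Hsingle => // _ _; rewrite addn0.
case: (ltngtP i j.+1) Hij => // [lt_ij|<-] _; last by rewrite subnn addn0.
have le_ij : i <= j by lia.
have := IHj le_ij (ltnW Hj) (fun l il lj => Hsingle l il (ltnW lj)).
have := Hsingle j le_ij (ltnSn j); have := Hs j Hj; rewrite /double_step; lia.
Qed.

(* Two double steps with no double step in between are one more apart in value
   than in index. *)
Lemma doubles_value_apartP k s : steps12_seq s ->
  doubles_value_apart k.+1 s <-> doubles_index_apart k s.
Proof.
move=> Hs; split=> [Hval i j|Hind i j lt_ij Hj Hi Hdj]; last first.
  have := Hind i j lt_ij Hj Hi Hdj; have := steps12_seq_nth_leq Hs lt_ij (ltnW Hj).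
  by move: Hi; rewrite /double_step; lia.
elim/ltn_ind: j => j IHj lt_ij Hj Hi Hdj.
have [[l /andP [il lj] Hdl]|Hsingle] :
    (exists2 l, i < l < j & double_step s l) \/
    (forall l, i.+1 <= l -> l < j -> ~ double_step s l).
  case: (boolP [exists l : 'I_j, (i < l) && (nth 0 s l.+1 == nth 0 s l + 2)]).
    by case/existsP=> l /andP [il /eqP Hdl]; left; exists l; rewrite ?il ?ltn_ord.
  move/existsPn=> Hn; right=> l il lj Hdl.
  by have := Hn (Ordinal lj); rewrite /= il Hdl eqxx.
- have := IHj l lj il ltac:(lia) Hi Hdl; lia.
- have := steps12_seq_nth_single Hs lt_ij (ltnW Hj) Hsingle.
  have := Hval i j lt_ij Hj Hi Hdj; move: Hi; rewrite /double_step; lia.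
Qed.

Lemma double_stepE s i : steps12_seq s -> i.+1 < size s ->
  double_step s i <-> nth 0 s i.+1 - nth 0 s i = 2.
Proof. by move=> Hs /Hs; rewrite /double_step; lia. Qed.

Lemma mem_steps12 m x s : s \in steps12 m x ->
  [/\ size s = m, (0 < m -> nth 0 s 0 = x) & steps12_seq s].
Proof.
elim: m x s => [|m IHm] x s; first by rewrite inE => /eqP ->; split=> // i.
case: m IHm => [|m] IHm; first by rewrite inE => /eqP ->; split=> // i.
rewrite [steps12 _ _]/= => /mapP [t]; rewrite mem_cat => Ht ->.
have [y Hy [Hsize Hhead Hsteps]] : exists2 y, (y = x.+1 \/ y = x.+2) &
    [/\ size t = m.+1, nth 0 t 0 = y & steps12_seq t].
  case/orP: Ht => /IHm [? Hhead ?]; [exists x.+1; [left|]|exists x.+2; [right|]];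
    by split=> //; apply: Hhead.
split=> //=; first by rewrite Hsize.
case=> [|i] /= Hi; last exact: Hsteps.
by rewrite /double_step /= Hhead; case: Hy => ->; [left|right]; lia.
Qed.

(* A scan of [s] accepting it iff its double steps are [k] indices apart and
   none occurs before index [c]; [c] counts down until a double step is allowed. *)
Fixpoint doubles_ok (k c : nat) (s : seq nat) : bool :=
  match s with
  | x :: ((y :: _) as t) =>
      if y == x.+1 then doubles_ok k c.-1 t
      else [&& c == 0, y == x.+2 & doubles_ok k k.-1 t]
  | _ => true
  end.

Lemma doubles_okP k c s : steps12_seq s ->
  doubles_ok k c s <-> doubles_from c s /\ doubles_index_apart k s.
Proof.
elim: s c => [|x t IHt] c Hs; first by split=> // _; split=> [j|i j].
case: t IHt Hs => [|y t] IHt Hs.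
  by split=> // _; split=> [j|i j] /=; rewrite ?ltnS ?ltn0.
have Ht := steps12_seq_behead Hs.
have [E1|E2] := Hs 0 isT.
- rewrite /= in E1.
  have -> : doubles_ok k c [:: x, y & t] = doubles_ok k c.-1 (y :: t).
    by rewrite [LHS]/= E1 addn1 eqxx.
  rewrite (IHt c.-1 Ht).
  split=> [[Hfrom Hapart]|[Hfrom Hapart]]; split.
  + case=> [|j] Hj Hdj; first by rewrite /double_step /= E1 in Hdj; lia.
    by have := Hfrom j Hj Hdj; lia.
  + case=> [|i] [|j] // lt_ij Hj Hi Hdj.
      by rewrite /double_step /= E1 in Hi; lia.
    exact: (Hapart i j lt_ij Hj Hi Hdj).
  + by move=> j Hj Hdj; have := Hfrom j.+1 Hj Hdj; lia.
  + by move=> i j lt_ij Hj Hi Hdj; have := Hapart i.+1 j.+1 lt_ij Hj Hi Hdj.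
- rewrite /double_step /= in E2.
  have D0 : double_step [:: x, y & t] 0 by rewrite /double_step /= E2.
  have -> : doubles_ok k c [:: x, y & t] = (c == 0) && doubles_ok k k.-1 (y :: t).
    rewrite [LHS]/= E2 (_ : (x + 2 == x.+1) = false); last by apply/eqP; lia.
    by rewrite addn2 eqxx.
  split=> [/andP [/eqP -> /(IHt _ Ht) [Hfrom Hapart]]|[Hfrom Hapart]].
  + split=> // [] [|i] [|j] // lt_ij Hj Hi Hdj.
      by have := Hfrom j Hj Hdj; lia.
    exact: (Hapart i j lt_ij Hj Hi Hdj).
  + apply/andP; split; first by have := Hfrom 0 isT D0; case: c {Hfrom}.
    apply/(IHt _ Ht); split.
      by move=> j Hj Hdj; have := Hapart 0 j.+1 isT Hj D0 Hdj; lia.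
    by move=> i j lt_ij Hj Hi Hdj; have := Hapart i.+1 j.+1 lt_ij Hj Hi Hdj.
Qed.

Definition count_doubles_ok (k m x c : nat) := count (doubles_ok k c) (steps12 m x).

Lemma count_doubles_okSS k m x c : count_doubles_ok k m.+2 x c =
  count_doubles_ok k m.+1 x.+1 c.-1 +
  (if c == 0 then count_doubles_ok k m.+1 x.+2 k.-1 else 0).
Proof.
rewrite /count_doubles_ok [steps12 _ _]/= count_map count_cat.
have head_steps12 y s : s \in steps12 m.+1 y -> exists t, s = y :: t.
  by case/mem_steps12; case: s => // y' t _ /(_ isT) /= ->; exists t.
congr addn.
  by apply: eq_in_count => _ /head_steps12 [t ->] /=; rewrite eqxx.
have neq_x21 : (x.+2 == x.+1) = false by apply/eqP; lia.
case: ifP => [/eqP ->|c_neq0]; last rewrite -(count_pred0 (steps12 m.+1 x.+2));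
  by apply: eq_in_count => _ /head_steps12 [t ->] /=; rewrite neq_x21 ?c_neq0 ?eqxx.
Qed.

Lemma count_doubles_ok_start k m x y c :
  count_doubles_ok k m x c = count_doubles_ok k m y c.
Proof.
case: m => [//|m]; elim: m x y c => [//|m IHm] x y c.
by rewrite !count_doubles_okSS !(IHm _ y).
Qed.

Lemma count_doubles_ok_wait k m x c :
  count_doubles_ok k (c + m).+1 x c = count_doubles_ok k m.+1 x 0.
Proof.
elim: c x => [//|c IHc] x.
by rewrite addSn count_doubles_okSS /= addn0 IHc (count_doubles_ok_start _ _ x.+1 x).
Qed.

Lemma count_doubles_ok_rec k m x : 0 < k ->
  count_doubles_ok k (k + m).+1 x 0 =
  count_doubles_ok k (k + m) x 0 + count_doubles_ok k m.+1 x 0.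
Proof.
case: k => // k _; rewrite !addSn count_doubles_okSS /= count_doubles_ok_wait.
by rewrite (count_doubles_ok_start _ _ x.+1 x) (count_doubles_ok_start _ _ x.+2 x).
Qed.

Lemma alpha_okE n s : 0 < n -> s \in steps12 n 1 -> alpha_ok n s = doubles_ok 5 0 s.
Proof.
move=> n_gt0 /mem_steps12 [Hsize Hhead Hsteps].
have step_lt i : i < n.-1 -> i.+1 < size s by rewrite Hsize; lia.
apply/idP/idP => [|/(doubles_okP 5 0 Hsteps) [_]].
- case/and4P=> _ _ _ /allP Hall.
  apply/(doubles_okP 5 0 Hsteps); split; first by move=> j.
  apply/(doubles_value_apartP 5 Hsteps) => i {}j lt_ij Hj Hi Hdj.
  have [i_lt j_lt] : i < n.-1 /\ j < n.-1 by rewrite Hsize in Hj; lia.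
  move: Hall => /(_ i); rewrite mem_iota add0n => /(_ i_lt) /allP /(_ j).
  rewrite mem_iota add0n j_lt lt_ij (double_stepE Hsteps Hj) in Hdj *.
  rewrite (double_stepE Hsteps (_ : i.+1 < size s)) in Hi; last by lia.
  by rewrite Hi Hdj; apply.
- move/(doubles_value_apartP 5 Hsteps)=> Hapart; apply/and4P; split.
  + by rewrite Hsize.
  + by rewrite Hhead.
  + apply/allP => i; rewrite mem_iota add0n => /step_lt /Hsteps.
    by rewrite /double_step; case=> ->; rewrite ?addn1 ?addn2 eqxx ?orbT.
  + apply/allP => i; rewrite mem_iota add0n => /step_lt i_lt.
    apply/allP => j; rewrite mem_iota add0n => /step_lt j_lt.
    apply/implyP => lt_ij; apply/implyP => /eqP Hi; apply/implyP => /eqP Hdj.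
    by apply: Hapart; rewrite // ?double_stepE.
Qed.

Lemma alphaE n : 0 < n -> alpha n = count_doubles_ok 5 n 1 0.
Proof. by move=> n_gt0; apply: eq_in_count => s; apply: alpha_okE. Qed.

Lemma alpha_small n : n <= 6 -> alpha n = n.
Proof. by case: n => [|[|[|[|[|[|[|]]]]]]] //; vm_compute. Qed.

Lemma alpha_rec n : 6 <= n -> alpha n = alpha n.-1 + alpha (n - 5).
Proof.
move=> n_ge6; rewrite !alphaE; try lia.
have [m ->] : exists m, n = (5 + m).+1 by exists (n - 6); lia.
by rewrite count_doubles_ok_rec // (_ : _ - 5 = m.+1) //; lia.
Qed.

Definition sparse_in (m : nat) (g : seq nat) : bool :=
  pairwise (fun a b => a + 5 <= b) g && all (fun a => 6 <= a <= m) g.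

Fixpoint sparse_lists (m : nat) : seq (seq nat) :=
  match m with
  | ((k.+1 as m1).+4 as m4).+1 =>
      sparse_lists m4 ++ [seq rcons g m | g <- sparse_lists m1]
  | _ => [:: [::]]
  end.

Lemma sparse_lists_small m : m <= 5 -> sparse_lists m = [:: [::]].
Proof. by case: m => [|[|[|[|[|[|m]]]]]]. Qed.

Lemma sparse_listsE m : 5 < m ->
  sparse_lists m = sparse_lists m.-1 ++ [seq rcons g m | g <- sparse_lists (m - 5)].
Proof. by case: m => [|[|[|[|[|[|m]]]]]]. Qed.

Lemma sparse_in_small m g : m <= 5 -> sparse_in m g = (g == [::]).
Proof.
by move=> m_le5; case: g => [|a g] //=; apply/negbTE; rewrite /sparse_in /=; lia.
Qed.

Lemma mem_sparse_lists m g : (g \in sparse_lists m) = sparse_in m g.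
Proof.
elim/ltn_ind: m g => m IHm g.
have [m_le5|m_gt5] := leqP m 5.
  by rewrite sparse_lists_small // inE sparse_in_small.
rewrite sparse_listsE // mem_cat IHm; last by lia.
apply/orP/idP.
- case=> [/andP [Hp Ha]|/mapP [g' Hg' ->]].
    rewrite /sparse_in Hp /=; apply/allP=> a /(allP Ha); lia.
  move: Hg'; rewrite IHm; last by lia.
  rewrite /sparse_in pairwise_rcons -cats1 all_cat /= leqnn andbT.
  case/andP=> Hp Ha; rewrite Hp m_gt5 !andbT.
  by apply/andP; split; apply/allP=> a /(allP Ha); lia.
- case/andP=> Hp Ha.
  case: (boolP (m \in g)) => Hin; last first.
    left; rewrite /sparse_in Hp /=; apply/allP=> a Hag.
    have := allP Ha a Hag; case: (a =P m) Hag => [->|]; [by rewrite (negbTE Hin)|lia].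
  right; case/lastP: g Hp Ha Hin => [//|g z].
  rewrite pairwise_rcons -cats1 all_cat /= andbT mem_cat inE.
  move=> /andP [Hz Hp] /andP [Ha Hzb] Hin.
  have Ez : z = m.
    case/orP: Hin => [Hg|/eqP //]; have := allP Hz m Hg; lia.
  subst z; apply/mapP; exists g; last by rewrite cats1.
  rewrite IHm; last by lia.
  rewrite /sparse_in Hp /=; apply/allP=> a Hag.
  have := allP Ha a Hag; have := allP Hz a Hag; lia.
Qed.

Lemma sparse_lists_uniq m : uniq (sparse_lists m).
Proof.
elim/ltn_ind: m => m IHm.
have [m_le5|m_gt5] := leqP m 5; first by rewrite sparse_lists_small.
rewrite sparse_listsE // cat_uniq IHm; last by lia.
rewrite map_inj_uniq; last exact: rcons_injl.
rewrite IHm ?andbT /=; last by lia.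
apply/hasPn=> _ /mapP [g _ ->]; rewrite /= mem_sparse_lists /sparse_in negb_and.
by apply/orP; right; apply/allPn; exists m; rewrite ?mem_rcons ?mem_head //; lia.
Qed.

Lemma alpha_sparse_lists n : 0 < n -> alpha n = size (sparse_lists (n + 4)).
Proof.
elim/ltn_ind: n => n IHn n_gt0.
have [n_le5|n_gt5] := leqP n 5.
  rewrite alpha_small; last by lia.
  by case: n n_gt0 n_le5 {IHn} => [|[|[|[|[|[|n]]]]]].
rewrite alpha_rec // sparse_listsE; last by lia.
rewrite size_cat size_map !IHn; try lia.
by congr (size (sparse_lists _) + size (sparse_lists _)); lia.
Qed.

Definition h_of (g : seq nat) : seq nat := mkseq (fun i => nth 0 g i + i.+1) (size g).

Lemma h_of_inj : injective h_of.
Proof.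
move=> g1 g2 E; have Hsize : size g1 = size g2.
  by move: (congr1 size E); rewrite !size_mkseq.
apply: (eq_from_nth (x0 := 0) Hsize) => i Hi.
by have := congr1 (nth 0^~ i) E; rewrite /= !nth_mkseq -?Hsize //; lia.
Qed.

Lemma valid_h_of d g : 5 <= d -> sparse_in (d - 4) g -> valid_h d (h_of (rcons g d.+1)).
Proof.
move=> d_ge5 /andP [Hp Ha]; set G := rcons g d.+1.
have HpG : pairwise (fun a b => a + 5 <= b) G.
  by rewrite pairwise_rcons Hp andbT; apply/allP=> a /(allP Ha); lia.
have HaG : all (leq 6) G.
  by rewrite all_rcons (_ : 6 <= d.+1) //; apply/allP=> a /(allP Ha); lia.
have HsG : size G = (size g).+1 by rewrite size_rcons.
have Hgap i : i.+1 < size G -> nth 0 G i + 5 <= nth 0 G i.+1.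
  by move=> Hi; apply: (pairwiseP 0 HpG); rewrite ?inE /=; lia.
rewrite /h_of /valid_h size_mkseq HsG; split=> [//|i Hi||//|i Hi].
- by rewrite !nth_mkseq //; try lia; have := Hgap i; lia.
- have G_gt0 : 0 < size G by rewrite HsG.
  by rewrite nth_mkseq //; have := allP HaG (nth 0 G 0) (mem_nth 0 G_gt0); lia.
- by rewrite nth_mkseq // /G nth_rcons ltnn eqxx; lia.
- by rewrite !nth_mkseq //; try lia; have := Hgap i; lia.
Qed.

Lemma valid_hP d h : valid_h d h ->
  exists2 g, sparse_in (d - 4) g & h = h_of (rcons g d.+1).
Proof.
move=> [Hsize _ Hhead Hlast Hgap].
have Hlow i : i < size h -> 7 + 6 * i <= nth 0 h i.
  by elim: i => [//|i IHi] Hi; have := IHi (ltnW Hi); have := Hgap i Hi; lia.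
set G := mkseq (fun i => nth 0 h i - i.+1) (size h).
have HsG : size G = size h by rewrite size_mkseq.
have nth_G i : i < size h -> nth 0 G i = nth 0 h i - i.+1.
  by move=> Hi; rewrite nth_mkseq.
have HpG : pairwise (fun a b => a + 5 <= b) G.
  apply/(pairwiseP 0) => i j; rewrite !inE /= HsG => Hi Hj.
  elim: j Hj => [//|j IHj] Hj lt_ij; rewrite !nth_G //.
  have := Hgap j Hj; have := Hlow j (ltnW Hj).
  have [lt_ij'|->] : i < j \/ i = j by lia.
    by have := IHj (ltnW Hj) lt_ij'; rewrite !nth_G //; lia.
  lia.
have HaG : all (leq 6) G.
  apply/allP => _ /(nthP 0) [i Hi <-]; rewrite HsG in Hi.
  by rewrite nth_G //; have := Hlow i Hi; lia.
have HGh : h = h_of G.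
  apply: (eq_from_nth (x0 := 0)); first by rewrite /h_of size_mkseq HsG.
  by move=> i Hi; rewrite /h_of nth_mkseq ?HsG // nth_G //; have := Hlow i Hi; lia.
case/lastP E: G => [|g z] in HpG HaG HGh HsG *; first by rewrite -HsG in Hsize.
have Ez : z = d.+1.
  have := nth_G (size h).-1; rewrite E nth_rcons -HsG size_rcons ltnn eqxx /=.
  by move: Hlast; rewrite -HsG size_rcons /= => -> /(_ (ltnSn _)); lia.
subst z; exists g => //.
move: HpG HaG; rewrite pairwise_rcons all_rcons => /andP [Hz Hp] /andP [_ Ha].
rewrite /sparse_in Hp; apply/allP => a Hag; rewrite (allP Ha a Hag) /=.
by have := allP Hz a Hag; lia.
Qed.

Theorem proposition7p1 (d : nat) : 46 <= d ->
  num_of (fun h : seq nat => valid_h d h) (alpha (d - 8)).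
Proof.
move=> d_ge46; exists [seq h_of (rcons g d.+1) | g <- sparse_lists (d - 4)]; split.
- rewrite map_inj_uniq ?sparse_lists_uniq // => g1 g2 /h_of_inj; exact: rcons_injl.
- move=> h; split=> [/mapP [g Hg ->]|/valid_hP [g Hg ->]].
    by apply: valid_h_of; rewrite -?mem_sparse_lists //; lia.
  by apply: map_f; rewrite mem_sparse_lists.
- by rewrite size_map alpha_sparse_lists; [congr (size (sparse_lists _)) | ]; lia.
Qed.
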